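(* Let $k\ge2$ and let $C_{3k}$ be the cycle on $3k$ vertices. Then $i\gamma(C_{3k})=k$, so $|V(C_{3k})|-i\gamma(C_{3k})=2k$. Moreover, if $M\subseteq V(C_{3k})$ is a set of $2k$ vertices inducing a matching of size $k$ in $C_{3k}$, then $M$ is a cover of $C_{3k}$, and for $W_1=\dots=W_{2k-1}=M$ there is no cover $W=\{w_{i_1},\dots,w_{i_t}\}$ of $C_{3k}$ with $1\le i_1<\dots<i_t\le 2k-1$ and $w_{i_j}\in W_{i_j}$ for all $j$.
   Context: A cover of a graph is a vertex set containing at least one endpoint of every edge. $\gamma(G;A)$ is the minimum size of a set $D$ such that every vertex of $A$ has a neighbor in $D$; $i\gamma(G)=\max\{\gamma(G;I): I\text{ an independent set of }G\}$. *)

(* Graphs are symmetric relations on a finType. *)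
From mathcomp Require Import all_boot.
Set Implicit Arguments. Unset Strict Implicit. Unset Printing Implicit Defensive.

Section GraphDefs.
Variable T : finType.
Variable e : rel T.

Definition is_cover (W : {set T}) : Prop :=
  forall x y, e x y -> (x \in W) || (y \in W).

Definition dominates_set (A D : {set T}) : bool :=
  [forall a in A, exists d in D, e a d].

(* gamma(G;A) : minimum size of such a D (default #|T| if none exists,
   which never matters when such D exist since then the min is <= #|T|) *)
Definition gammaA (A : {set T}) : nat :=
  \big[minn/#|T|]_(D : {set T} | dominates_set A D) #|D|.

Definition independent (I : {set T}) : bool :=
  [forall x in I, forall y in I, ~~ e x y].

Definition igamma : nat :=
  \max_(I : {set T} | independent I) gammaA I.

Definition induced_edges (M : {set T}) : {set {set T}} :=
  [set [set p.1; p.2] | p in [set p : T * T | (p.1 \in M) && (p.2 \in M) && e p.1 p.2]].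

Definition induces_matching_of_size (M : {set T}) (m : nat) : Prop :=
  (forall x, x \in M -> #|[set y in M | e x y]| <= 1) /\ #|induced_edges M| = m.
End GraphDefs.

Definition cycle_rel (n : nat) : rel 'I_n :=
  fun i j => (val j == (val i).+1 %% n) || (val i == (val j).+1 %% n).
Arguments cycle_rel n : clear implicits.

(* Lower bound on i-gamma: the multiples of 3 form an independent set whose neighbourhoods
   are pairwise disjoint, so dominating it needs k vertices.  Upper bound: every independent
   set is dominated by one vertex per block {3j, 3j+1, 3j+2}.
   For the matching part, C_(3k) is 2-regular: each vertex of M has exactly one neighbour in M,
   hence one outside M, so the 2k edges leaving M must reach both neighbours of each of the k
   vertices outside M.  Thus M is a cover, and any cover inside M must contain every vertex of M
   (to cover its outer edge), which is impossible with at most 2k-1 picks. *)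

From mathcomp Require Import all_boot all_order zify.
Import Order.TTheory.
Set Implicit Arguments. Unset Strict Implicit. Unset Printing Implicit Defensive.

Section Graph.
Variables (T : finType) (e : rel T).

Definition deg_in (A : {set T}) (x : T) : nat := #|[set y in A | e x y]|.

Lemma deg_inE A x : deg_in A x = \sum_(y in A) e x y.
Proof.
rewrite /deg_in -sum1_card big_mkcond [RHS]big_mkcond; apply: eq_bigr => y _.
by rewrite inE; case: (y \in A); case: (e x y).
Qed.

Lemma deg_in_setC A x : deg_in A x + deg_in (~: A) x = deg_in setT x.
Proof.
rewrite /deg_in -(cardsID A [set y in setT | e x y]).
by congr (_ + _); apply: eq_card => y; rewrite !inE andbC.
Qed.

Lemma deg_in_sub (A B : {set T}) x : A \subset B -> deg_in A x <= deg_in B x.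
Proof.
move=> /subsetP AB; apply: subset_leq_card; apply/subsetP => y.
by rewrite !inE => /andP[/AB -> ->].
Qed.

Lemma deg_in_full_mem (A : {set T}) x y :
  deg_in setT x <= deg_in A x -> e x y -> y \in A.
Proof.
move=> le_full exy; have : [set z in A | e x z] == [set z in setT | e x z].
  by rewrite eqEcard le_full andbT; apply/subsetP => z; rewrite !inE => /andP[_ ->].
by move/eqP/setP/(_ y); rewrite !inE exy !andbT => ->.
Qed.

Lemma gammaA_le_card (A D : {set T}) : dominates_set e A D -> gammaA e A <= #|D|.
Proof.
move=> domD; rewrite /gammaA -minEnat.
exact: (@bigmin_le_cond _ _ _ _ D _ (fun D => #|D|) domD).
Qed.

Lemma gammaA_ge_card (A : {set T}) :
  {in A &, forall a b y, e a y -> e b y -> a = b} -> #|A| <= gammaA e A.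
Proof.
move=> private_nbr; apply: (big_ind (fun m => #|A| <= m)) => [||D domD].
- exact: max_card.
- by move=> m1 m2 hm1 hm2; rewrite leq_min hm1 hm2.
pose f a := odflt a [pick d in D | e a d].
have fP a : a \in A -> (f a \in D) && e a (f a).
  move=> aA; rewrite /f; case: pickP => [d|none] //=.
  by have /exists_inP[d dD ead] := forall_inP domD a aA; move: (none d); rewrite dD ead.
rewrite -(card_in_imset (f := f)); last first.
  move=> a b aA bA fab; have /andP[_ eaf] := fP a aA; have /andP[_ ebf] := fP b bA.
  by apply: private_nbr aA bA _ eaf _; rewrite fab.
by apply/subset_leq_card/subsetP => _ /imsetP[a aA ->]; case/andP: (fP a aA).
Qed.

Section TwoRegular.
Hypotheses (e_sym : symmetric e) (e_irr : irreflexive e).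
Hypothesis deg2 : forall x, deg_in setT x = 2.

Lemma sum_deg_in_sym (A B : {set T}) :
  \sum_(x in A) deg_in B x = \sum_(y in B) deg_in A y.
Proof.
under eq_bigr do rewrite deg_inE; rewrite exchange_big /=.
by apply: eq_bigr => y _; rewrite deg_inE; apply: eq_bigr => x _; rewrite e_sym.
Qed.

Lemma induced_edgeP (M E : {set T}) x : E \in induced_edges e M -> x \in E ->
  x \in M /\ exists2 y, (y \in M) && e x y & E = [set x; y].
Proof.
case/imsetP=> -[a b] /[!inE] /= /andP[/andP[aM bM] eab] -> /set2P[->|->].
  by split=> //; exists b; rewrite ?bM.
by split=> //; exists a; rewrite ?aM // 1?e_sym // setUC.
Qed.

(* The [m] edges of the induced matching are disjoint pairs inside [M], so they exhaust [M]. *)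
Lemma perfect_induced_matching_deg (M : {set T}) m x :
  induces_matching_of_size e M m -> #|M| = 2 * m -> x \in M -> deg_in M x = 1.
Proof.
case=> deg_le1 cardE cardM xM; set E := induced_edges e M in cardE.
have card2 : {in E, forall A : {set T}, #|A| = 2}.
  move=> _ /imsetP[[a b] /[!inE] /= /andP[_ eab] ->]; rewrite cards2.
  by case: eqP eab => [->|//]; rewrite e_irr.
have trivE : trivIset E.
  apply/trivIsetP => A B AE BE; apply: contraR; rewrite -setI_eq0 => /set0Pn[y /setIP[yA yB]].
  have [yM [z /andP[zM eyz] ->]] := induced_edgeP AE yA.
  have [_ [z' /andP[zM' eyz'] ->]] := induced_edgeP BE yB.
  suff -> : z = z' by rewrite eqxx.
  by apply: (card_le1_eqP (deg_le1 y yM)); rewrite inE ?zM ?zM' ?eyz ?eyz'.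
have coverE : cover E = M.
  apply/eqP; rewrite eqEcard; apply/andP; split.
    by apply/bigcupsP => A AE; apply/subsetP => y yA; case: (induced_edgeP AE yA).
  rewrite cardM (card_uniform_partition card2); first by move: cardE; lia.
  by apply/and3P; split=> //; apply/negP => /card2; rewrite cards0.
apply/eqP; rewrite eqn_leq deg_le1 // card_gt0; apply/set0Pn.
rewrite -coverE in xM; case/bigcupP: xM => A AE xA.
by have [_ [y yMe _]] := induced_edgeP AE xA; exists y; rewrite inE.
Qed.

Lemma perfect_induced_matching_deg_out (M : {set T}) m x :
  induces_matching_of_size e M m -> #|M| = 2 * m -> x \in M -> deg_in (~: M) x = 1.
Proof.
move=> hM cardM xM; have := deg_in_setC M x.
by rewrite deg2 (perfect_induced_matching_deg hM cardM xM) => -[].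
Qed.

(* Counting the edges between [M] and its complement from both sides shows that every
   vertex outside [M] has both of its neighbours in [M]. *)
Lemma cover_of_deg_out (M : {set T}) :
  (forall x, x \in M -> deg_in (~: M) x = 1) -> #|M| = 2 * #|~: M| -> is_cover e M.
Proof.
move=> deg_out cardM.
have le2 x : x \in ~: M -> deg_in M x <= 2 ?= iff (deg_in M x == 2).
  by move=> _; apply: leqif_eq; rewrite -(deg2 x); apply: deg_in_sub (subsetT M).
have /forall_inP deg_in2 : [forall (x | x \in ~: M), deg_in M x == 2].
  rewrite -(leqif_sum le2).2 sum_nat_const -sum_deg_in_sym.
  by rewrite (eq_bigr (fun=> 1)) // sum1_card cardM mulnC.
move=> x y exy; case xM: (x \in M) => //=.
by apply: deg_in_full_mem exy; rewrite deg2 -(eqP (deg_in2 x _)) // inE xM.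
Qed.

Lemma cover_subset_eq (M W : {set T}) :
  (forall x, x \in M -> 0 < deg_in (~: M) x) -> is_cover e W -> W \subset M -> W = M.
Proof.
move=> deg_out coverW WM; apply/eqP; rewrite eqEsubset WM; apply/subsetP => x xM.
have /card_gt0P[y] := deg_out x xM; rewrite !inE => /andP[yM exy].
by case/orP: (coverW x y exy) => // /(subsetP WM); rewrite (negbTE yM).
Qed.

Lemma perfect_induced_matching_min_cover (M : {set T}) m :
  induces_matching_of_size e M m -> #|M| = 2 * m -> #|~: M| = m ->
  is_cover e M /\ forall W, is_cover e W -> W \subset M -> W = M.
Proof.
move=> hM cardM cardMC; have deg_out := perfect_induced_matching_deg_out hM cardM.
split; first by apply: cover_of_deg_out; rewrite ?cardMC.
by move=> W; apply: cover_subset_eq => x /deg_out ->.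
Qed.
End TwoRegular.
End Graph.

Section Cycle.
Variable n : nat.

Lemma cycle_relE (x y : 'I_n) : cycle_rel n x y =
  [|| y == x.+1 :> nat, (x == n - 1 :> nat) && (y == 0 :> nat),
      x == y.+1 :> nat | (y == n - 1 :> nat) && (x == 0 :> nat)].
Proof.
have succE (z : 'I_n) : z.+1 %% n = if z.+1 == n then 0 else z.+1.
  by case: eqP => [->|ne]; rewrite ?modnn // modn_small //; have := ltn_ord z; lia.
rewrite /cycle_rel /= !succE; have := ltn_ord x; have := ltn_ord y.
by case: ifP; case: ifP => *; apply/idP/idP => ?; lia.
Qed.

Lemma cycle_rel_sym : symmetric (cycle_rel n).
Proof. by move=> x y; rewrite /cycle_rel orbC. Qed.

Lemma cycle_rel_irr : 1 < n -> irreflexive (cycle_rel n).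
Proof. by move=> n_gt1 x; apply/negbTE; rewrite cycle_relE; lia. Qed.

Lemma deg_in_cycle : 2 < n -> forall x, deg_in (cycle_rel n) setT x = 2.
Proof.
move=> n_gt2 x; rewrite /deg_in; have x_lt := ltn_ord x.
have succP : (if x.+1 == n then 0 else x.+1) < n by case: ifP => ?; lia.
have predP : (if x == 0 :> nat then n - 1 else x - 1) < n by case: ifP => ?; lia.
have -> : [set y in setT | cycle_rel n x y] = [set Ordinal succP; Ordinal predP].
  apply/setP => y; rewrite !inE -!val_eqE /= cycle_relE; have := ltn_ord y.
  by case: ifP; case: ifP => *; apply/idP/idP => ?; lia.
by rewrite cards2 -val_eqE /=; case: ifP; case: ifP => *; lia.
Qed.

End Cycle.

Section Cycle3.
Variable k : nat.

Fact block_vertex_subproof (j : 'I_k) r : 3 * j + r %% 3 < 3 * k.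
Proof. by have := ltn_ord j; lia. Qed.

(* Vertex [3j + r] of the [j]-th block; [r] is read modulo 3 so that no bound on it is needed. *)
Definition block_vertex (j : 'I_k) (r : nat) : 'I_(3 * k) :=
  Ordinal (block_vertex_subproof j r).

Fact block_of_subproof (a : 'I_(3 * k)) : a %/ 3 < k.
Proof. by have := ltn_ord a; lia. Qed.

Definition block_of (a : 'I_(3 * k)) : 'I_k := Ordinal (block_of_subproof a).

(* One vertex per block dominates [I]: the middle vertex [3j+1], unless it lies in [I],
   in which case its neighbours [3j], [3j+2] do not, and [3j+2] serves. *)
Lemma gammaA_cycle3_le (I : {set 'I_(3 * k)}) :
  independent (cycle_rel (3 * k)) I -> gammaA (cycle_rel (3 * k)) I <= k.
Proof.
move=> /forall_inP indI.
have ind x y : x \in I -> y \in I -> ~~ cycle_rel (3 * k) x y.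
  by move=> xI yI; apply: (forall_inP (indI x xI)).
pose pick_in j := if block_vertex j 1 \in I then block_vertex j 2 else block_vertex j 1.
apply: leq_trans (gammaA_le_card (D := [set pick_in j | j in 'I_k]) _) _.
  apply/forall_inP => a aI; apply/exists_inP; exists (pick_in (block_of a)).
    exact: imset_f.
  rewrite /pick_in; have := ltn_ord a; case: ifP => mid_in.
    by move: (ind _ _ aI mid_in); rewrite !cycle_relE /=; lia.
  have a_ne_mid : a %% 3 != 1.
    apply: contraFN mid_in => /eqP a_mid.
    by suff -> : block_vertex (block_of a) 1 = a by []; apply/val_inj => /=; lia.
  by rewrite cycle_relE /=; lia.
by rewrite -[k in _ <= k]card_ord; apply: leq_imset_card.
Qed.

Definition multiples3 : {set 'I_(3 * k)} := [set block_vertex j 0 | j in 'I_k].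

Lemma card_multiples3 : #|multiples3| = k.
Proof.
rewrite card_in_imset ?card_ord // => j j' _ _ /(congr1 val) /= eq_jj'.
by apply/val_inj => /=; lia.
Qed.

Lemma independent_multiples3 : independent (cycle_rel (3 * k)) multiples3.
Proof.
apply/forall_inP => _ /imsetP[j _ ->]; apply/forall_inP => _ /imsetP[j' _ ->].
by rewrite cycle_relE /=; have := ltn_ord j; have := ltn_ord j'; lia.
Qed.

Lemma multiples3_private_nbr :
  {in multiples3 &, forall a b y, cycle_rel (3 * k) a y -> cycle_rel (3 * k) b y -> a = b}.
Proof.
move=> _ _ /imsetP[j _ ->] /imsetP[j' _ ->] y; rewrite !cycle_relE /= => ha hb.
apply/val_inj => /=; move: ha hb.
by have := ltn_ord y; have := ltn_ord j; have := ltn_ord j'; lia.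
Qed.

Lemma igamma_cycle3 : igamma (cycle_rel (3 * k)) = k.
Proof.
apply/eqP; rewrite eqn_leq; apply/andP; split.
  by apply/bigmax_leqP => I; apply: gammaA_cycle3_le.
rewrite -{1}card_multiples3; apply: leq_trans (gammaA_ge_card multiples3_private_nbr) _.
exact: leq_bigmax_cond independent_multiples3.
Qed.

End Cycle3.

Theorem mainTheorem8 (k : nat) (hk : 2 <= k) :
  igamma (cycle_rel (3 * k)) = k /\
  #|'I_(3 * k)| - igamma (cycle_rel (3 * k)) = 2 * k /\
  (forall M : {set 'I_(3 * k)},
      #|M| = 2 * k -> induces_matching_of_size (cycle_rel (3 * k)) M k ->
      is_cover (cycle_rel (3 * k)) M /\
      forall W : 'I_(2 * k - 1) -> {set 'I_(3 * k)},
        (forall i, W i = M) ->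
        ~ exists (S : {set 'I_(2 * k - 1)}) (w : 'I_(2 * k - 1) -> 'I_(3 * k)),
            (forall i, i \in S -> w i \in W i) /\
            is_cover (cycle_rel (3 * k)) [set w i | i in S]).
Proof.
split; first exact: igamma_cycle3.
split; first by rewrite card_ord igamma_cycle3; lia.
move=> M cardM matchM.
have cardMC : #|~: M| = k by have := cardsC M; rewrite card_ord cardM; lia.
have n_gt2 : 2 < 3 * k by lia.
have [coverM minM] := perfect_induced_matching_min_cover (@cycle_rel_sym _)
  (cycle_rel_irr (ltnW n_gt2)) (deg_in_cycle n_gt2) matchM cardM cardMC.
split=> // W W_M [S [w [wW coverS]]].
have sub_M : [set w i | i in S] \subset M.
  by apply/subsetP => _ /imsetP[i iS ->]; rewrite -(W_M i) wW.
have := leq_trans (leq_imset_card w S) (max_card S).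
by rewrite card_ord (minM _ coverS sub_M) cardM; lia.
Qed.
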